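(* Assume Assumption (S) of the context holds. Then $\|M^*\|:=\sup_{\omega\in\mathbb V^k,\ \omega\not\equiv0}\frac{\|M^*\omega\|}{\|\omega\|}\le C$, where $C$ is a positive constant independent of the mesh $\{I_i\}$.
   Context: Let $\Omega=[a,b]$ be partitioned into finitely many cells $I_i=[x_{i-\frac12},x_{i+\frac12}]$ with sizes $h_i$, $h=\max_i h_i$, quasi-uniform ($h\le Ch_i$ for all $i$ with a fixed constant $C$). $\|\cdot\|$ is the $L^2(\Omega)$ norm, $(\cdot,\cdot)_{I_i}$ the $L^2(I_i)$ inner product. $\mathbb V^k=\{v\in L^2(\Omega): v|_{I_i}\in\mathbb P^k(I_i)\ \forall i\}$. Each $I_i$ has subdivision points $x_{i-\frac12}=x_{i,0}<x_{i,1}<\dots<x_{i,k}<x_{i,k+1}=x_{i+\frac12}$, control volumes $I_{i,j}=[x_{i,j},x_{i,j+1}]$, $j=0,\dots,k$, and $\mathbb V^{k,*}$ is the space of functions constant on each $I_{i,j}$. On each $I_i$ a quadrature $Q_i^k(v)=\sum_{j=0}^{k+1}A_{i,j}v(x_{i,j})$ is given with error $R_i^k(v)=\int_{I_i}v\,dx-Q_i^k(v)$, exact on $\mathbb P^{k-1}(I_i)$. $M^*:\mathbb V^k\to\mathbb V^{k,*}$ is defined cellwise: for $v=\omega|_{I_i}$, $(M^*\omega)|_{I_{i,0}}=v(x_{i-\frac12})+A_{i,0}v'(x_{i-\frac12})$ and $(M^*\omega)|_{I_{i,j}}-(M^*\omega)|_{I_{i,j-1}}=A_{i,j}v'(x_{i,j})$,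 $j=1,\dots,k$ (one-sided values from inside $I_i$). $L_{i,\ell}$ is the shifted Legendre polynomial of degree $\ell$ on $I_i$ with $L_{i,\ell}(x_{i+\frac12})=1$, $(L_{i,\ell},L_{i,m})_{I_i}=\delta_{\ell m}h_i/(2\ell+1)$. Assumption (S): $k\ge1$ and for every $i$, (1) $R_i^k(v)=0$ for all $v\in\mathbb P^{2k-1}(I_i)$, and (2) $\frac{h_i}{2k-1}-Q_i^k(L_{i,k+1}L_{i,k-1})>0$. *)

From HB Require Import structures.
From mathcomp Require Import all_boot all_order all_algebra.
From mathcomp Require Import all_classical all_reals all_analysis.
Set Implicit Arguments.
Unset Strict Implicit.
Unset Printing Implicit Defensive.
Import Order.TTheory GRing.Theory Num.Theory.
Local Open Scope ring_scope.

Section Defs.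
Variable R : realType.

Definition integ (c d : R) (f : R -> R) : R :=
  \int[lebesgue_measure]_(x in `[c, d]) f x.

Definition L2sq (c d : R) (f : R -> R) : R := integ c d (fun x => f x ^+ 2).

(* shifted Legendre polynomial of degree l on [c,d] (Rodrigues formula):
   L_l(x) = 1/(l! (d-c)^l) * D^l [ (x-c)^l (x-d)^l ];
   it satisfies L_l(d) = 1 and (L_l, L_m)_{[c,d]} = delta_{lm} (d-c)/(2l+1). *)
Definition legendre (c d : R) (l : nat) : {poly R} :=
  ((l`!)%:R * (d - c) ^+ l)^-1 *:
    ((('X - c%:P) ^+ l * ('X - d%:P) ^+ l)^`(l)).

(* mesh nodes xs 0 < xs 1 < ... < xs N ; cell i = [xs i, xs i.+1] *)
Definition hcell (xs : nat -> R) (i : nat) : R := xs i.+1 - xs i.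

(* subdivision points / weights on cell i: affine images of the
   reference nodes xi (on [0,1]) and reference weights w *)
Definition subpt (xs xi : nat -> R) (i j : nat) : R := xs i + hcell xs i * xi j.
Definition wt (xs w : nat -> R) (i j : nat) : R := hcell xs i * w j.

Definition quad (k : nat) (x A : nat -> R) (v : {poly R}) : R :=
  \sum_(j < k.+2) A j * v.[x j].

Definition assumptionS (k : nat) (c d : R) (x A : nat -> R) : Prop :=
  (forall v : {poly R}, (size v <= k.*2)%N ->
     integ c d (fun t => v.[t]) - quad k x A v = 0) /\
  0 < (d - c) / ((k.*2).-1)%:R
        - quad k x A (legendre c d k.+1 * legendre c d k.-1).

(* value of M^* omega on the control volume I_{i,j}, where v = omega|_{I_i}:
   c_0 = v(x_0) + A_0 v'(x_0),  c_j = c_{j-1} + A_j v'(x_j). *)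
Fixpoint mstar_val (v : {poly R}) (x A : nat -> R) (j : nat) : R :=
  match j with
  | 0 => v.[x 0%N] + A 0%N * (v^`()).[x 0%N]
  | j'.+1 => mstar_val v x A j' + A j * (v^`()).[x j]
  end.

(* ||omega||^2 for omega|_{I_i} = p i *)
Definition normsq_omega (N : nat) (xs : nat -> R) (p : nat -> {poly R}) : R :=
  \sum_(i < N) L2sq (xs i) (xs i.+1) (fun t => (p i).[t]).

Definition normsq_Mstar (k N : nat) (xs xi w : nat -> R) (p : nat -> {poly R}) : R :=
  \sum_(i < N) \sum_(j < k.+1)
    L2sq (subpt xs xi i j) (subpt xs xi i j.+1)
         (fun _ => mstar_val (p i) (subpt xs xi i) (wt xs w i) j).

End Defs.

From HB Require Import structures.
From mathcomp Require Import all_boot all_order all_algebra.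
From mathcomp Require Import all_classical all_reals all_analysis.
From mathcomp Require Import ring lra.
Set Implicit Arguments.
Unset Strict Implicit.
Import Order.TTheory GRing.Theory Num.Theory numFieldNormedType.Exports.
Local Open Scope ring_scope.

(* On a cell [c, d] of width h, the substitution x = c + h t turns v into a
   polynomial u on [0, 1] with ||v||^2 = h ||u||^2_{L^2(0,1)}.  Since the
   subdivision points and weights of every cell are affine images of the same
   reference ones, the value of M^* v on the j-th control volume is ell_j(u) for
   a fixed linear functional ell_j on P^k.  On this finite-dimensional space
   ell_j(u) = (r_j, u)_{L^2(0,1)} for a Riesz representer r_j (obtained from the
   inverse Gram matrix of the monomials), so ell_j(u)^2 <= ||r_j||^2 ||u||^2 by
   Cauchy-Schwarz.  The control volumes have widths h (xi_{j+1} - xi_j), hence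
   ||M^* v||^2 <= C^2 ||v||^2 on every cell with the mesh-independent constant
   C^2 = sum_j (xi_{j+1} - xi_j) ||r_j||^2. *)

Lemma functional_polyE (R : realType) n (phi : {poly R} -> R) (u : {poly R}) :
  {morph phi : p q / p + q} -> (forall c, {morph phi : p / c *: p >-> c * p}) ->
  (size u <= n)%N -> phi u = \sum_(a < n) u`_a * phi 'X^a.
Proof.
move=> phiD phiZ le_u_n.
have phi0 : phi 0 = 0 by rewrite -(scale0r 0) phiZ mul0r.
have u_sum : u = \sum_(a < n) u`_a *: 'X^a.
  rewrite -poly_def; apply/polyP => i; rewrite coef_poly; case: ltnP => // le_n_i.
  by rewrite nth_default // (leq_trans le_u_n le_n_i).
rewrite {1}u_sum (big_morph phi phiD phi0).
by apply: eq_bigr => a _; rewrite phiZ.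
Qed.

Section PolyIntegral.
Variable R : realType.
Implicit Types (c d h : R) (p q u v : {poly R}).

Definition antideriv p : {poly R} := \poly_(i < (size p).+1) (p`_i.-1 / i%:R).

Lemma coef_antideriv p i : (antideriv p)`_i = p`_i.-1 / i%:R.
Proof.
rewrite coef_poly; case: ltnP => // le_p_i.
case: i le_p_i => [|i] le_p_i; first by rewrite invr0 mulr0.
by rewrite /= nth_default ?mul0r // -ltnS.
Qed.

Lemma deriv_antideriv p : (antideriv p)^`() = p.
Proof.
by apply/polyP => i; rewrite coef_deriv coef_antideriv -[LHS]mulr_natr divfK.
Qed.

Lemma antiderivD p q : antideriv (p + q) = antideriv p + antideriv q.
Proof. by apply/polyP => i; rewrite coefD !coef_antideriv coefD mulrDl. Qed.

Lemma antiderivZ c p : antideriv (c *: p) = c *: antideriv p.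
Proof. by apply/polyP => i; rewrite coefZ !coef_antideriv coefZ mulrA. Qed.

Lemma antideriv_at0 p : (antideriv p).[0] = 0.
Proof. by rewrite horner_coef0 coef_antideriv invr0 mulr0. Qed.

Lemma integ_poly_deriv c d P q : c < d -> P^`() = q ->
  integ c d (fun t => q.[t]) = P.[d] - P.[c].
Proof.
move=> lt_cd <-; rewrite /integ /Rintegral (@continuous_FTC2 _ _ (horner P)) //.
- by apply: continuous_subspaceT => x; exact: continuous_horner.
- split=> [x _| |].
  + exact: derivable_horner.
  + by apply: cvg_at_right_filter; exact: continuous_horner.
  + by apply: cvg_at_left_filter; exact: continuous_horner.
- by move=> x _; rewrite derivE.
Qed.

Lemma integ_poly c d q : c < d ->
  integ c d (fun t => q.[t]) = (antideriv q).[d] - (antideriv q).[c].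
Proof. by move=> lt_cd; apply: integ_poly_deriv; rewrite ?deriv_antideriv. Qed.

Lemma L2sq_cst c d m : c < d -> L2sq c d (fun=> m) = m ^+ 2 * (d - c).
Proof.
move=> lt_cd; rewrite /L2sq.
have -> : (fun=> m ^+ 2) = (fun t => (m ^+ 2)%:P.[t]).
  by apply/funext => t; rewrite hornerC.
rewrite (@integ_poly_deriv _ _ (m ^+ 2 *: 'X)) //.
  by rewrite !hornerZ !hornerX mulrBr.
by rewrite derivZ derivX alg_polyC.
Qed.

Definition affine c h : {poly R} := h *: 'X + c%:P.

Lemma horner_affine c h t : (affine c h).[t] = c + h * t.
Proof. by rewrite hornerD hornerZ hornerX hornerC addrC. Qed.

Lemma deriv_affine c h : (affine c h)^`() = h%:P.
Proof. by rewrite derivD derivC derivZ derivX addr0 alg_polyC. Qed.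

Lemma size_comp_affine c h v : h != 0 -> size (v \Po affine c h) = size v.
Proof.
move=> h_neq0; apply: size_comp_poly2.
rewrite /affine -mul_polyC size_MXaddC polyC_eq0 (negbTE h_neq0).
by rewrite size_polyC h_neq0.
Qed.

Lemma integ_comp_affine c d q : c < d ->
  integ c d (fun t => q.[t]) =
  (d - c) * integ 0 1 (fun t => (q \Po affine c (d - c)).[t]).
Proof.
move=> lt_cd; have h_neq0 : d - c != 0 by rewrite subr_eq0 gt_eqF.
set h := d - c; set P := antideriv q.
rewrite (@integ_poly_deriv 0 1 (h^-1 *: (P \Po affine c h))) ?ltr01 //; last first.
  rewrite derivZ deriv_comp deriv_antideriv deriv_affine.
  by rewrite [_ * _%:P]mulrC mul_polyC scalerA mulVf ?scale1r.
rewrite integ_poly // !hornerZ !horner_comp !horner_affine mulr0 mulr1 addr0.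
by rewrite /h subrKC -mulrBr mulVKf.
Qed.

Definition dot01 u v : R := (antideriv (u * v)).[1].

Lemma dot01E u v : dot01 u v = integ 0 1 (fun t => (u * v).[t]).
Proof. by rewrite integ_poly ?ltr01 // antideriv_at0 subr0. Qed.

Lemma dot01C u v : dot01 u v = dot01 v u.
Proof. by rewrite /dot01 mulrC. Qed.

Lemma dot01Dl u v p : dot01 (u + v) p = dot01 u p + dot01 v p.
Proof. by rewrite /dot01 mulrDl antiderivD hornerD. Qed.

Lemma dot01Zl c u p : dot01 (c *: u) p = c * dot01 u p.
Proof. by rewrite /dot01 -scalerAl antiderivZ hornerZ. Qed.

Lemma dot01Dr u v p : dot01 p (u + v) = dot01 p u + dot01 p v.
Proof. by rewrite !(dot01C p) dot01Dl. Qed.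

Lemma dot01Zr c u p : dot01 p (c *: u) = c * dot01 p u.
Proof. by rewrite !(dot01C p) dot01Zl. Qed.

Lemma dot01_coefE n u v : (size u <= n)%N ->
  dot01 u v = \sum_(a < n) u`_a * dot01 'X^a v.
Proof.
exact: (@functional_polyE _ n (dot01^~ v) u
  (fun p q => dot01Dl p q v) (fun c p => dot01Zl c p v)).
Qed.

Lemma integ_sqr_ge0 c d u : 0 <= integ c d (fun t => (u * u).[t]).
Proof. by apply: Rintegral_ge0 => t _; rewrite hornerM -expr2 sqr_ge0. Qed.

Lemma dot01_ge0 u : 0 <= dot01 u u.
Proof. by rewrite dot01E integ_sqr_ge0. Qed.

Lemma poly_eq0_on_01 p : (forall s, 0 < s < 1 -> p.[s] = 0) -> p = 0.
Proof.
move=> p_on_01; apply/eqP; apply: contraT => p_neq0.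
pose rs := [seq (m.+2%:R : R)^-1 | m <- iota 0 (size p)].
have := @max_poly_roots _ p rs p_neq0.
rewrite size_map size_iota ltnn; apply.
- apply/allP => x /mapP[m _ ->]; apply/rootP; apply: p_on_01.
  by rewrite invr_gt0 ltr0n /= invf_lt1 ?ltr0n // ltr1n.
- rewrite map_inj_in_uniq ?iota_uniq // => m1 m2 _ _ /invr_inj /eqP.
  by rewrite eqr_nat => /eqP [].
Qed.

Lemma dot01_eq0 u : dot01 u u = 0 -> u = 0.
Proof.
move=> uu0; set P := antideriv (u * u).
have P_on_01 (s : R) : 0 < s < 1 -> P.[s] = 0.
  case/andP=> s_gt0 s_lt1.
  have := integ_sqr_ge0 0 s u; rewrite integ_poly // antideriv_at0 subr0 => Ps_ge0.
  have := integ_sqr_ge0 s 1 u; rewrite integ_poly // -/P.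
  by rewrite [P.[1]]uu0 sub0r oppr_ge0 => Ps_le0; apply/eqP; rewrite eq_le Ps_le0.
have /eqP : u * u = 0.
  by rewrite -(deriv_antideriv (u * u)) -/P (poly_eq0_on_01 P_on_01) deriv0.
by rewrite mulf_eq0 orbb => /eqP.
Qed.

Lemma dot01_CauchySchwarz u v : dot01 u v ^+ 2 <= dot01 u u * dot01 v v.
Proof.
have [->|v_neq0] := eqVneq v 0.
  rewrite /dot01 !mulr0 -(scale0r (0 : {poly R})) antiderivZ hornerZ.
  by rewrite mul0r expr0n mulr0.
have vv_gt0 : 0 < dot01 v v.
  by rewrite lt_def dot01_ge0 andbT; apply: contra v_neq0 => /eqP/dot01_eq0 ->.
have := dot01_ge0 (dot01 v v *: u + (- dot01 u v) *: v).
rewrite !dot01Dl !dot01Dr !dot01Zl !dot01Zr (dot01C v u) => ge0.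
have : 0 <= dot01 v v * (dot01 u u * dot01 v v - dot01 u v ^+ 2) by nra.
by rewrite pmulr_rge0 // subr_ge0.
Qed.

Lemma L2sq_comp_affine c d v : c < d ->
  L2sq c d (fun t => v.[t]) =
  (d - c) * dot01 (v \Po affine c (d - c)) (v \Po affine c (d - c)).
Proof.
move=> lt_cd; rewrite /L2sq dot01E -comp_polyM -integ_comp_affine //.
by congr integ; apply/funext => t; rewrite hornerM expr2.
Qed.

End PolyIntegral.

Section Riesz.
Variables (R : realType) (n : nat).
Implicit Types (u v : {poly R}) (r : 'rV[R]_n.+1).

Definition coefrow u : 'rV[R]_n.+1 := \row_a u`_a.

Definition row_poly r : {poly R} := \poly_(i < n.+1) r 0 (inord i).

Lemma coefrow_poly r : coefrow (row_poly r) = r.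
Proof. by apply/rowP => i; rewrite !mxE coef_poly ltn_ord inord_val. Qed.

Definition gram : 'M[R]_n.+1 := \matrix_(a, b) dot01 'X^a 'X^b.

Lemma dot01_gram u v : (size u <= n.+1)%N -> (size v <= n.+1)%N ->
  dot01 u v = (coefrow u *m gram *m (coefrow v)^T) 0 0.
Proof.
move=> le_u_n le_v_n; rewrite (dot01_coefE v le_u_n) mxE.
under [RHS]eq_bigr do rewrite !mxE big_distrl /=.
rewrite exchange_big; apply: eq_bigr => a _.
rewrite dot01C (dot01_coefE 'X^a le_v_n) mulr_sumr; apply: eq_bigr => b _.
by rewrite !mxE (dot01C 'X^b) mulrA mulrAC.
Qed.

Lemma gram_unit : gram \in unitmx.
Proof.
rewrite -row_free_unit; apply: inj_row_free => r rG0.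
have u0 : dot01 (row_poly r) (row_poly r) = 0.
  by rewrite dot01_gram ?size_poly // coefrow_poly rG0 mul0mx mxE.
by rewrite -[r]coefrow_poly (dot01_eq0 u0); apply/rowP => i; rewrite !mxE coef0.
Qed.

Section Functional.
Variable phi : {poly R} -> R.
Hypothesis phiD : {morph phi : p q / p + q}.
Hypothesis phiZ : forall c, {morph phi : p / c *: p >-> c * p}.

Definition riesz : {poly R} := row_poly ((\row_a phi 'X^a) *m invmx gram).

Lemma dot01_riesz u : (size u <= n.+1)%N -> dot01 riesz u = phi u.
Proof.
move=> le_u_n; rewrite dot01_gram ?size_poly // coefrow_poly.
rewrite -(mulmxA _ (invmx gram)) mulVmx ?gram_unit // mulmx1.
rewrite (functional_polyE phiD phiZ le_u_n) mxE.
by apply: eq_bigr => a _; rewrite !mxE mulrC.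
Qed.

Lemma riesz_bound u : (size u <= n.+1)%N ->
  phi u ^+ 2 <= dot01 riesz riesz * dot01 u u.
Proof. by move=> le_u_n; rewrite -dot01_riesz // dot01_CauchySchwarz. Qed.

End Functional.
End Riesz.

Section ControlVolumes.
Variable R : realType.
Implicit Types (c d h : R) (u v : {poly R}) (x A xi w : nat -> R).

Lemma mstar_valD x A j : {morph (fun v => mstar_val v x A j) : u v / u + v}.
Proof. by move=> u v; elim: j => [|j IH] /=; rewrite ?IH derivD !hornerD; ring. Qed.

Lemma mstar_valZ x A j c : {morph (fun v => mstar_val v x A j) : u / c *: u >-> c * u}.
Proof. by move=> u; elim: j => [|j IH] /=; rewrite ?IH derivZ !hornerZ; ring. Qed.

Lemma mstar_val_comp_affine v c h xi w j :
  mstar_val v (fun j => c + h * xi j) (fun j => h * w j) j =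
  mstar_val (v \Po affine c h) xi w j.
Proof.
have deriv_comp_at t : ((v \Po affine c h)^`()).[t] = (v^`()).[c + h * t] * h.
  by rewrite deriv_comp deriv_affine hornerM horner_comp horner_affine hornerC.
by elim: j => [|j IH] /=; rewrite ?IH !deriv_comp_at ?horner_comp ?horner_affine; ring.
Qed.

Variables (k : nat) (xi w : nat -> R).
Hypothesis xi_incr : forall j, (j <= k)%N -> xi j < xi j.+1.

Definition mstar_riesz (j : nat) : {poly R} := riesz k (fun v => mstar_val v xi w j).

Definition mstar_bound2 : R :=
  \sum_(j < k.+1) (xi j.+1 - xi j) * dot01 (mstar_riesz j) (mstar_riesz j).

Lemma mstar_bound2_ge0 : 0 <= mstar_bound2.
Proof.
apply: sumr_ge0 => j _; rewrite mulr_ge0 ?dot01_ge0 // subr_ge0 ltW //.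
by rewrite xi_incr // -ltnS.
Qed.

Lemma L2sq_mstar_cell c d v : c < d -> (size v <= k.+1)%N ->
  \sum_(j < k.+1) L2sq (c + (d - c) * xi j) (c + (d - c) * xi j.+1)
    (fun=> mstar_val v (fun j => c + (d - c) * xi j) (fun j => (d - c) * w j) j)
  <= mstar_bound2 * L2sq c d (fun t => v.[t]).
Proof.
move=> lt_cd le_v_k; have h_gt0 : 0 < d - c by rewrite subr_gt0.
set h := d - c; set u := v \Po affine c h.
have le_u_k : (size u <= k.+1)%N by rewrite size_comp_affine ?gt_eqF.
rewrite L2sq_comp_affine // -/h -/u /mstar_bound2 mulr_suml.
apply: ler_sum => j _; have xi_j := xi_incr (ltn_ord j).
rewrite L2sq_cst ?ltrD2l ?ltr_pM2l // mstar_val_comp_affine -/u.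
have -> : c + h * xi j.+1 - (c + h * xi j) = h * (xi j.+1 - xi j) by ring.
have -> : (xi j.+1 - xi j) * dot01 (mstar_riesz j) (mstar_riesz j) * (h * dot01 u u)
    = dot01 (mstar_riesz j) (mstar_riesz j) * dot01 u u * (h * (xi j.+1 - xi j)) by ring.
have width_ge0 : 0 <= h * (xi j.+1 - xi j) by rewrite ltW // mulr_gt0 // subr_gt0.
rewrite ler_wpM2r //.
exact: (riesz_bound (mstar_valD xi w j) (mstar_valZ xi w j) le_u_k).
Qed.

End ControlVolumes.

Theorem proposition3p8 (R : realType) (k : nat) (xi w : nat -> R) (Cq : R) :
  (1 <= k)%N ->
  xi 0%N = 0 -> xi k.+1 = 1 ->
  (forall j : nat, (j <= k)%N -> xi j < xi j.+1) ->
  exists C : R, 0 < C /\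
    forall (N : nat) (a b : R) (xs : nat -> R),
      (0 < N)%N -> xs 0%N = a -> xs N = b ->
      (forall i : nat, (i < N)%N -> xs i < xs i.+1) ->
      (forall i j : nat, (i < N)%N -> (j < N)%N -> hcell xs j <= Cq * hcell xs i) ->
      (forall i : nat, (i < N)%N ->
         assumptionS k (xs i) (xs i.+1) (subpt xs xi i) (wt xs w i)) ->
      forall p : nat -> {poly R},
        (forall i : nat, (i < N)%N -> (size (p i) <= k.+1)%N) ->
        Num.sqrt (normsq_Mstar k N xs xi w p) <= C * Num.sqrt (normsq_omega N xs p).
Proof.
move=> _ _ _ xi_incr; set K := mstar_bound2 k xi w.
have K_ge0 : 0 <= K by exact: mstar_bound2_ge0.
exists (Num.sqrt K + 1); split; first by rewrite ltr_wpDl ?sqrtr_ge0.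
move=> N a b xs _ _ _ xs_incr _ _ p le_p_k.
have omega_ge0 : 0 <= normsq_omega N xs p.
  by apply: sumr_ge0 => i _; apply: Rintegral_ge0 => t _; exact: sqr_ge0.
have : normsq_Mstar k N xs xi w p <= K * normsq_omega N xs p.
  rewrite mulr_sumr; apply: ler_sum => i _.
  exact: (L2sq_mstar_cell w xi_incr (xs_incr _ (ltn_ord i)) (le_p_k _ (ltn_ord i))).
rewrite -ler_sqrt ?mulr_ge0 // sqrtrM // => /le_trans; apply.
by rewrite ler_wpM2r ?sqrtr_ge0 // lerDl.
Qed.
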